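(* For any $R>0$ and $\varphi_0>0$ there exists a unique smooth solution $\varphi(r)$ on $[R,\infty)$ of the problem $$\varphi'(r)=(1+\varphi(r)^2)\big(2-\varphi(r)\coth r\big),\qquad \varphi(R)=\varphi_0.$$ Moreover, $\lim_{r\to\infty}\varphi(r)=2$.
   Context: (This ODE is the equation satisfied by $\varphi=f'$ when the rotational graph $z=f(r)$, $r$ being the hyperbolic distance to a fixed point of $\mathbb{H}^2$, is a translating soliton in $\mathbb{H}^2\times\mathbb{R}$, i.e. has mean curvature equal to its angle function.) *)

From Stdlib Require Import Reals.
From Coquelicot Require Import Coquelicot.
Open Scope R_scope.

Definition coth (x : R) : R := cosh x / sinh x.

(* "phi is smooth on [R0, +oo)": phi is C^oo on an open neighbourhood
   (R0 - eps, +oo) of the closed half-line (every iterated derivative exists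
   at every point of that open set). *)
Definition smooth_on_half_line (R0 : R) (phi : R -> R) : Prop :=
  exists eps : R, 0 < eps /\
    forall (n : nat) (x : R), R0 - eps < x -> ex_derive_n phi n x.

Definition solves_ivp (R0 phi0 : R) (phi : R -> R) : Prop :=
  phi R0 = phi0 /\
  forall r : R, R0 <= r ->
    is_derive phi r ((1 + (phi r) ^ 2) * (2 - phi r * coth r)).

(* Existence: freezing coth r below R0/2 and clamping the unknown to [0, M] gives a bounded,
   globally Lipschitz equation, which Picard iteration solves on all of R. For r >= R0 the
   solution cannot cross M (there the slope is <= 0) nor 0 (there the slope is 2), and just
   left of R0 it stays near phi0 by its Lipschitz bound; so it solves the true equation on a
   neighbourhood of [R0, oo). Its derivatives are then polynomials in coth r and phi r, which
   gives smoothness. Uniqueness is Gronwall's argument. For the limit: where phi > 2 + e the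
   slope is <= -e, and for large r where phi < 2 - e it is >= e/2 (as coth r -> 1), so phi
   eventually enters (2 - e, 2 + e) and never leaves. *)

From Stdlib Require Import Reals Lra Lia Classical.
From Coquelicot Require Import Coquelicot.
Open Scope R_scope.

Lemma lipschitz_continuous (f : R -> R) (k x : R) :
  (forall y, Rabs (f y - f x) <= k * Rabs (y - x)) -> continuous f x.
Proof.
  intros Hf. apply continuity_pt_filterlim. intros eps Heps.
  set (k' := Rmax k 1).
  assert (Hk' : 0 < k') by (unfold k'; pose proof (Rmax_r k 1); lra).
  exists (eps / k'). split; [apply Rdiv_lt_0_compat; lra|].
  intros y [_ Hy]. simpl in Hy. unfold R_dist in *.
  assert (Hyk : Rabs (y - x) * k' < eps).
  { apply (Rmult_lt_compat_r k') in Hy; [|lra].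
    replace (eps / k' * k') with eps in Hy by (field; lra). exact Hy. }
  assert (k * Rabs (y - x) <= k' * Rabs (y - x))
    by (apply Rmult_le_compat_r; [apply Rabs_pos|apply Rmax_l]).
  specialize (Hf y). simpl. unfold R_dist. lra.
Qed.

Lemma RInt_abs_le_pow_r (f : R -> R) (c r C : R) (k : nat) :
  c <= r -> ex_RInt f c r ->
  (forall t, c <= t <= r -> Rabs (f t) <= C * (t - c) ^ k) ->
  Rabs (RInt f c r) <= C * (r - c) ^ S k / INR (S k).
Proof.
  intros Hcr Hf Hb.
  assert (HS : 0 < INR (S k)) by (apply lt_0_INR; lia).
  assert (Hpow : is_RInt (fun t => C * (t - c) ^ k) c r (C * (r - c) ^ S k / INR (S k))).
  { replace (C * (r - c) ^ S k / INR (S k))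
      with (minus (C * (r - c) ^ S k / INR (S k)) (C * (c - c) ^ S k / INR (S k)))
      by (rewrite Rminus_diag, pow_i, Rmult_0_r, Rdiv_0_l by lia;
          unfold minus, plus, opp; simpl; rewrite Ropp_0, Rplus_0_r; reflexivity).
    apply (is_RInt_derive (fun t => C * (t - c) ^ S k / INR (S k))).
    - intros t _. auto_derive; [easy|].
      change (match k with 0%nat => 1 | S _ => INR k + 1 end) with (INR (S k)).
      rewrite <- Rminus_def. set (p := (t - c) ^ k). field. lra.
    - intros t _. apply (ex_derive_continuous (fun t => C * (t - c) ^ k)). auto_derive. easy. }
  eapply Rle_trans; [apply abs_RInt_le; assumption|].
  rewrite <- (is_RInt_unique _ _ _ _ Hpow).
  apply RInt_le; [assumption| |eexists; eassumption|].
  - apply (ex_RInt_norm f c r Hf).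
  - intros t Ht. apply Hb. lra.
Qed.

Lemma RInt_abs_le_pow (f : R -> R) (c r C : R) (k : nat) :
  ex_RInt f c r ->
  (forall t, Rmin c r <= t <= Rmax c r -> Rabs (f t) <= C * Rabs (t - c) ^ k) ->
  Rabs (RInt f c r) <= C * Rabs (r - c) ^ S k / INR (S k).
Proof.
  intros Hf Hb. destruct (Rle_dec c r) as [Hcr|Hrc].
  - rewrite Rmin_left, Rmax_right in Hb by lra. rewrite (Rabs_pos_eq (r - c)) by lra.
    apply RInt_abs_le_pow_r; [easy|easy|]. intros t Ht.
    rewrite <- (Rabs_pos_eq (t - c)) by lra. apply Hb. lra.
  - (* reflect [r, c] onto [c, 2c - r] *)
    rewrite Rmin_right, Rmax_left in Hb by lra. rewrite (Rabs_left (r - c)) by lra.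
    assert (Ec : -1 * c + 2 * c = c) by ring.
    assert (Er : -1 * (2 * c - r) + 2 * c = r) by ring.
    pose proof (RInt_comp_lin f (-1) (2 * c) c (2 * c - r)) as Hlin.
    pose proof (ex_RInt_comp_lin f (-1) (2 * c) c (2 * c - r)) as Hex.
    rewrite Ec, Er in Hlin, Hex. rewrite <- (Hlin Hf).
    replace (- (r - c)) with (2 * c - r - c) by ring.
    apply RInt_abs_le_pow_r; [lra|now apply Hex|].
    intros t Ht. change (scal (-1) ?y) with (-1 * y).
    rewrite Rabs_mult, Rabs_m1, Rmult_1_l.
    replace (t - c) with (Rabs (-1 * t + 2 * c - c)) by (rewrite Rabs_left1 by lra; ring).
    apply Hb. lra.
Qed.

Lemma RInt_abs_le_const (f : R -> R) (a b M : R) :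
  ex_RInt f a b -> (forall t, Rmin a b <= t <= Rmax a b -> Rabs (f t) <= M) ->
  Rabs (RInt f a b) <= M * Rabs (b - a).
Proof.
  intros Hf Hb.
  replace (M * Rabs (b - a)) with (M * Rabs (b - a) ^ 1 / INR 1) by (simpl; field).
  apply RInt_abs_le_pow; [easy|]. intros t Ht. simpl. rewrite Rmult_1_r. now apply Hb.
Qed.

Lemma le_of_derive_nonpos (f df : R -> R) (a b : R) : a <= b ->
  (forall x, a <= x <= b -> is_derive f x (df x)) ->
  (forall x, a <= x <= b -> df x <= 0) -> f b <= f a.
Proof.
  intros Hab Hd Hn. destruct (Req_dec a b) as [<-|Hne]; [lra|].
  destruct (MVT_cor2 f df a b) as [x [Hx Hmvt]]; [lra| |].
  - intros x Hx. apply is_derive_Reals, Hd. lra.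
  - assert (df x <= 0) by (apply Hn; lra). nra.
Qed.

Lemma is_derive_mult_abs (x : R) : is_derive (fun t => t * Rabs t) x (2 * Rabs x).
Proof.
  apply is_derive_Reals. intros eps Heps. exists (mkposreal eps Heps).
  intros h Hh0 Hh. simpl in Hh.
  assert (Hq : Rabs ((x + h) * Rabs (x + h) - x * Rabs x - 2 * Rabs x * h) <= h * h).
  { unfold Rabs at 2 3 4. repeat destruct Rcase_abs; apply Rabs_le; split; nra. }
  replace (((x + h) * Rabs (x + h) - x * Rabs x) / h - 2 * Rabs x) with
    (((x + h) * Rabs (x + h) - x * Rabs x - 2 * Rabs x * h) / h) by (field; auto).
  unfold Rdiv. rewrite Rabs_mult, Rabs_inv.
  assert (Hpos : 0 < Rabs h) by now apply Rabs_pos_lt.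
  apply Rle_lt_trans with (h * h * / Rabs h).
  - apply Rmult_le_compat_r; [left; now apply Rinv_0_lt_compat|exact Hq].
  - replace (h * h) with (Rabs h * Rabs h) by (unfold Rabs; destruct Rcase_abs; ring).
    field_simplify; lra.
Qed.

Lemma barrier_le (f df : R -> R) (a b c : R) : a <= b ->
  (forall x, a <= x <= b -> is_derive f x (df x)) -> f a <= c ->
  (forall x, a <= x <= b -> c < f x -> df x <= 0) -> f b <= c.
Proof.
  intros Hab Hd Ha Hn.
  (* q t = t^2 + t|t| is C^1, vanishes for t <= 0 and increases for t >= 0 *)
  set (q := fun t => t * t + t * Rabs t).
  assert (Hq : forall x, a <= x <= b ->
    is_derive (fun x => q (f x - c)) x ((2 * (f x - c) + 2 * Rabs (f x - c)) * df x)).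
  { intros x Hx. unfold q.
    assert (Hfc : is_derive (fun x => f x - c) x (df x)).
    { evar_last; [apply (is_derive_minus f (fun _ => c)); [now apply Hd|apply is_derive_const]|].
      unfold minus, plus, opp, zero; simpl; ring. }
    evar_last.
    - apply (is_derive_plus (fun x => (f x - c) * (f x - c))).
      + apply (is_derive_mult (fun x => f x - c) (fun x => f x - c)); [exact Hfc|exact Hfc|].
        intros; apply Rmult_comm.
      + apply (is_derive_comp (fun t => t * Rabs t) (fun x => f x - c));
          [apply is_derive_mult_abs|exact Hfc].
    - unfold plus, scal, mult; simpl. unfold mult; simpl. ring. }
  assert (Hdec : q (f b - c) <= q (f a - c)).
  { apply (le_of_derive_nonpos _ _ a b Hab Hq). intros x Hx.
    destruct (Rle_dec (f x) c).
    - rewrite Rabs_left1 by lra. nra.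
    - rewrite Rabs_pos_eq by lra. assert (df x <= 0) by (apply Hn; lra). nra. }
  unfold q in Hdec. rewrite (Rabs_left1 (f a - c)) in Hdec by lra.
  destruct (Rle_dec (f b) c) as [|Hbc]; [easy|].
  rewrite Rabs_pos_eq in Hdec by lra. nra.
Qed.

Lemma eventually_le_of_derive (f df : R -> R) (a c e : R) : 0 < e ->
  (forall x, a <= x -> is_derive f x (df x)) ->
  (forall x, a <= x -> c < f x -> df x <= - e) ->
  exists X, forall x, X <= x -> f x <= c.
Proof.
  intros He Hd Hn.
  assert (Hhit : exists x1, a <= x1 /\ f x1 <= c).
  { set (T := Rmax 0 ((f a - c) / e)).
    assert (HT : 0 <= T /\ f a - c <= e * T).
    { split; [apply Rmax_l|].
      pose proof (Rmult_le_compat_l e _ _ (Rlt_le _ _ He) (Rmax_r 0 ((f a - c) / e))) as HeT.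
      replace (e * ((f a - c) / e)) with (f a - c) in HeT by (field; lra). exact HeT. }
    destruct (classic (exists x, a <= x <= a + T /\ f x <= c)) as [[x [Hx Hfx]]|Hnone].
    { exists x. split; [lra|easy]. }
    assert (Habove : forall x, a <= x <= a + T -> c < f x).
    { intros x Hx. apply Rnot_le_lt. intros Hfx. apply Hnone. now exists x. }
    assert (Hslope : f (a + T) + e * (a + T) <= f a + e * a).
    { apply (le_of_derive_nonpos (fun x => f x + e * x) (fun x => df x + e)); [lra| |].
      - intros x Hx. apply (is_derive_plus f (fun x => e * x)); [apply Hd; lra|].
        auto_derive; [easy|ring].
      - intros x Hx. pose proof (Hn x ltac:(lra) (Habove x Hx)). simpl. lra. }
    pose proof (Habove (a + T) ltac:(lra)). lra. }
  destruct Hhit as [x1 [Hx1 Hfx1]]. exists x1. intros x Hx.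
  apply (barrier_le f df x1 x c Hx); [intros; apply Hd; lra|easy|].
  intros y Hy Hfy. pose proof (Hn y ltac:(lra) Hfy). lra.
Qed.

Lemma ode_unique_lipschitz (F : R -> R -> R) (y1 y2 : R -> R) (a b L : R) :
  a <= b ->
  (forall x, a <= x <= b -> is_derive y1 x (F x (y1 x))) ->
  (forall x, a <= x <= b -> is_derive y2 x (F x (y2 x))) ->
  (forall x, a <= x <= b -> Rabs (F x (y1 x) - F x (y2 x)) <= L * Rabs (y1 x - y2 x)) ->
  y1 a = y2 a -> y1 b = y2 b.
Proof.
  intros Hab Hd1 Hd2 Hlip Ha.
  (* the weight exp (-2 L x) absorbs the Lipschitz growth of (y1 - y2)^2 *)
  set (g := fun x => exp (- (2 * L) * x) * (y1 x - y2 x) ^ 2).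
  assert (Hg : forall x, a <= x <= b -> is_derive g x
    (exp (- (2 * L) * x) * (2 * (y1 x - y2 x) * (F x (y1 x) - F x (y2 x))
                            - 2 * L * (y1 x - y2 x) ^ 2))).
  { intros x Hx. unfold g.
    assert (Hdiff : is_derive (fun x => y1 x - y2 x) x (F x (y1 x) - F x (y2 x)))
      by (apply (is_derive_minus y1 y2); [apply Hd1|apply Hd2]; easy).
    evar_last.
    - apply (is_derive_mult (fun x => exp (- (2 * L) * x)) (fun x => (y1 x - y2 x) ^ 2)).
      + auto_derive; [easy|reflexivity].
      + apply (is_derive_pow (fun x => y1 x - y2 x) 2 x _ Hdiff).
      + intros; apply Rmult_comm.
    - simpl. unfold plus, mult; simpl. ring. }
  assert (Hdec : g b <= g a).
  { apply (le_of_derive_nonpos g _ a b Hab Hg). intros x Hx.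
    set (d := y1 x - y2 x). set (D := F x (y1 x) - F x (y2 x)).
    assert (HdD : d * D <= L * d ^ 2).
    { apply Rle_trans with (Rabs d * Rabs D); [rewrite <- Rabs_mult; apply RRle_abs|].
      apply Rle_trans with (Rabs d * (L * Rabs d)).
      - apply Rmult_le_compat_l; [apply Rabs_pos|now apply Hlip].
      - rewrite <- (pow2_abs d). simpl. lra. }
    pose proof (exp_pos (- (2 * L) * x)). nra. }
  unfold g in Hdec. rewrite Ha, Rminus_diag in Hdec.
  pose proof (exp_pos (- (2 * L) * b)).
  assert (Hsq : (y1 b - y2 b) ^ 2 <= 0) by (simpl in Hdec; nra).
  assert (y1 b - y2 b = 0) by nra. lra.
Qed.

Lemma continuous_bounded (f : R -> R) (a b : R) : a <= b ->
  (forall x, a <= x <= b -> continuous f x) ->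
  exists B, forall x, a <= x <= b -> Rabs (f x) <= B.
Proof.
  intros Hab Hf.
  destruct (continuity_ab_maj (fun x => Rabs (f x)) a b Hab) as [xm [Hxm _]].
  { intros x Hx. apply continuity_pt_filterlim, continuous_Rabs_comp. now apply Hf. }
  now exists (Rabs (f xm)).
Qed.

Definition exp_partial (n : nat) (x : R) : R :=
  sum_f_R0 (fun i => / INR (Factorial.fact i) * x ^ i) n.

Lemma exp_partial_cv (x : R) : Un_cv (fun n => exp_partial n x) (exp x).
Proof. exact (proj2_sig (exist_exp x)). Qed.

Lemma exp_partial_le (n m : nat) (x : R) : 0 <= x -> (n <= m)%nat ->
  exp_partial n x <= exp_partial m x.
Proof.
  intros Hx Hnm. induction Hnm as [|m _ IH]; [lra|].
  unfold exp_partial in *. rewrite tech5.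
  assert (0 <= / INR (Factorial.fact (S m)) * x ^ S m).
  { apply Rmult_le_pos; [left; apply Rinv_0_lt_compat, INR_fact_lt_0|now apply pow_le]. }
  lra.
Qed.

Lemma exp_partial_le_exp (n : nat) (x : R) : 0 <= x -> exp_partial n x <= exp x.
Proof.
  intros Hx. apply (growing_ineq (fun n => exp_partial n x)); [|apply exp_partial_cv].
  intros k. apply exp_partial_le; [easy|lia].
Qed.

Section Picard.

Variables (G : R -> R -> R) (K L t0 y0 : R).
Hypothesis L_pos : 0 < L.
Hypothesis G_cont : forall (h : R -> R) x, continuous h x -> continuous (fun s => G s (h s)) x.
Hypothesis G_bound : forall s y, Rabs (G s y) <= K.
Hypothesis G_lip : forall s y1 y2, Rabs (G s y1 - G s y2) <= L * Rabs (y1 - y2).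

Fixpoint picard (n : nat) : R -> R :=
  match n with
  | O => fun _ => y0
  | S n => fun t => y0 + RInt (fun s => G s (picard n s)) t0 t
  end.

Let K_nonneg : 0 <= K.
Proof. pose proof (G_bound 0 0). pose proof (Rabs_pos (G 0 0)). lra. Qed.

Let ex_RInt_G (h : R -> R) (a b : R) :
  (forall x, continuous h x) -> ex_RInt (fun s => G s (h s)) a b.
Proof.
  intros Hh. apply (ex_RInt_continuous (V := R_CompleteNormedModule)).
  intros; now apply G_cont.
Qed.

Lemma picard_lipschitz (n : nat) (x z : R) :
  Rabs (picard n x - picard n z) <= K * Rabs (x - z).
Proof.
  revert x z. induction n as [|n IH]; intros x z; simpl.
  - rewrite Rminus_diag, Rabs_R0. apply Rmult_le_pos; [easy|apply Rabs_pos].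
  - assert (Hcont : forall t, continuous (picard n) t)
      by (intros t; apply (lipschitz_continuous _ K); intros; apply IH).
    rewrite <- (RInt_Chasles (fun s => G s (picard n s)) t0 z x) by now apply ex_RInt_G.
    change (plus ?u ?v) with (u + v).
    assert (Hcancel : forall u v w : R, u + (v + w) - (u + v) = w) by (intros; ring).
    rewrite Hcancel.
    apply RInt_abs_le_const; [now apply ex_RInt_G|]. intros; apply G_bound.
Qed.

Lemma picard_continuous (n : nat) (x : R) : continuous (picard n) x.
Proof. apply (lipschitz_continuous _ K). intros; apply picard_lipschitz. Qed.

Lemma picard_step (n : nat) (s : R) :
  Rabs (picard (S n) s - picard n s) <=
  K * L ^ n * Rabs (s - t0) ^ S n / INR (Factorial.fact (S n)).
Proof.
  revert s. induction n as [|n IH]; intros s.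
  - assert (Hcancel : forall u v : R, u + v - u = v) by (intros; ring).
    simpl picard. rewrite Hcancel, pow_O, pow_1, Rmult_1_r.
    change (INR (Factorial.fact 1)) with 1. rewrite Rdiv_1_r.
    apply RInt_abs_le_const; [apply ex_RInt_G; intros; apply continuous_const|].
    intros; apply G_bound.
  - assert (Hcancel : forall u v w : R, u + v - (u + w) = v - w) by (intros; ring).
    change (picard (S (S n)) s - picard (S n) s) with
      (y0 + RInt (fun t => G t (picard (S n) t)) t0 s
       - (y0 + RInt (fun t => G t (picard n t)) t0 s)).
    rewrite Hcancel, <- (RInt_minus (V := R_CompleteNormedModule))
      by (apply ex_RInt_G, picard_continuous).
    assert (Hfact : 0 < INR (Factorial.fact (S n))) by apply INR_fact_lt_0.
    replace (K * L ^ S n * Rabs (s - t0) ^ S (S n) / INR (Factorial.fact (S (S n))))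
      with (L * K * L ^ n / INR (Factorial.fact (S n)) * Rabs (s - t0) ^ S (S n) / INR (S (S n)))
      by (rewrite (fact_simpl (S n)), mult_INR; change (L ^ S n) with (L * L ^ n);
          generalize (L ^ n) (Rabs (s - t0) ^ S (S n)); intros;
          field; split; [lra|apply not_0_INR; lia]).
    apply RInt_abs_le_pow.
    + apply (ex_RInt_minus (V := R_CompleteNormedModule)); apply ex_RInt_G, picard_continuous.
    + intros t _. change (minus ?u ?v) with (u - v).
      eapply Rle_trans; [apply G_lip|].
      replace (L * K * L ^ n / INR (Factorial.fact (S n)) * Rabs (t - t0) ^ S n)
        with (L * (K * L ^ n * Rabs (t - t0) ^ S n / INR (Factorial.fact (S n))))
        by (generalize (L ^ n) (Rabs (t - t0) ^ S n); intros; field; lra).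
      apply Rmult_le_compat_l; [lra|apply IH].
Qed.

Definition picard_tail (n : nat) (a : R) : R :=
  K / L * (exp (L * a) - exp_partial n (L * a)).

Lemma picard_cauchy (n m : nat) (s a : R) : (n <= m)%nat -> Rabs (s - t0) <= a ->
  Rabs (picard m s - picard n s) <= picard_tail n a.
Proof.
  intros Hnm Ha.
  assert (Hmono : Rabs (picard m s - picard n s) <=
                  K / L * (exp_partial m (L * a) - exp_partial n (L * a))).
  { induction Hnm as [|m Hnm IH].
    - rewrite !Rminus_diag, Rabs_R0, Rmult_0_r. lra.
    - replace (picard (S m) s - picard n s)
        with ((picard (S m) s - picard m s) + (picard m s - picard n s)) by ring.
      eapply Rle_trans; [apply Rabs_triang|].
      unfold exp_partial at 1. rewrite tech5. fold (exp_partial m (L * a)).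
      assert (Hstep : Rabs (picard (S m) s - picard m s) <=
        K / L * (/ INR (Factorial.fact (S m)) * (L * a) ^ S m)).
      { eapply Rle_trans; [apply picard_step|].
        assert (Hpow : Rabs (s - t0) ^ S m <= a ^ S m)
          by (apply pow_incr; split; [apply Rabs_pos|easy]).
        pose proof (INR_fact_lt_0 (S m)).
        assert (0 <= L ^ m) by (apply pow_le; lra).
        rewrite Rpow_mult_distr. change (L ^ S m) with (L * L ^ m).
        revert Hpow. generalize (Rabs (s - t0) ^ S m) (a ^ S m). intros p q Hpow.
        replace (K / L * (/ INR (Factorial.fact (S m)) * (L * L ^ m * q)))
          with (K * L ^ m * q / INR (Factorial.fact (S m))) by (field; lra).
        apply Rmult_le_compat_r; [left; now apply Rinv_0_lt_compat|].
        apply Rmult_le_compat_l; [apply Rmult_le_pos; [apply K_nonneg|easy]|easy]. }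
      lra. }
  eapply Rle_trans; [exact Hmono|]. unfold picard_tail.
  apply Rmult_le_compat_l; [apply Rdiv_le_0_compat; lra|].
  assert (0 <= a) by (pose proof (Rabs_pos (s - t0)); lra).
  pose proof (exp_partial_le_exp m (L * a) ltac:(nra)). lra.
Qed.

Lemma picard_tail_vanishes (a eps : R) : 0 < eps ->
  exists N, forall n, (N <= n)%nat -> picard_tail n a < eps.
Proof.
  intros Heps. destruct (Req_dec K 0) as [HK0|HK0].
  { exists O. intros n _. unfold picard_tail. rewrite HK0. unfold Rdiv. lra. }
  assert (HK : 0 < K) by (pose proof K_nonneg; lra).
  destruct (exp_partial_cv (L * a) (eps * L / K)) as [N HN].
  { apply Rdiv_lt_0_compat; [nra|lra]. }
  exists N. intros n Hn. specialize (HN n Hn). unfold R_dist in HN.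
  apply Rabs_def2 in HN. unfold picard_tail.
  apply Rmult_lt_reg_l with (L / K); [apply Rdiv_lt_0_compat; lra|].
  replace (L / K * (K / L * (exp (L * a) - exp_partial n (L * a))))
    with (exp (L * a) - exp_partial n (L * a)) by (field; lra).
  replace (L / K * eps) with (eps * L / K) by (field; lra). lra.
Qed.

Definition picard_limit (t : R) : R := real (Lim_seq (fun n => picard n t)).

Lemma picard_limit_cv (t : R) : Un_cv (fun n => picard n t) (picard_limit t).
Proof.
  assert (Hc : Cauchy_crit (fun n => picard n t)).
  { intros eps Heps. destruct (picard_tail_vanishes (Rabs (t - t0)) eps Heps) as [N HN].
    exists N. intros n m Hn Hm. unfold R_dist.
    destruct (Nat.le_ge_cases n m) as [Hnm|Hmn].
    - rewrite Rabs_minus_sym.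
      eapply Rle_lt_trans; [apply picard_cauchy; [exact Hnm|apply Rle_refl]|]. now apply HN.
    - eapply Rle_lt_trans; [apply picard_cauchy; [exact Hmn|apply Rle_refl]|]. now apply HN. }
  destruct (Rcomplete.R_complete _ Hc) as [l Hl].
  unfold picard_limit. replace (Lim_seq (fun n => picard n t)) with (Finite l); [exact Hl|].
  symmetry. apply is_lim_seq_unique, is_lim_seq_Reals, Hl.
Qed.

Lemma picard_limit_tail (n : nat) (s a : R) : Rabs (s - t0) <= a ->
  Rabs (picard_limit s - picard n s) <= picard_tail n a.
Proof.
  intros Ha. apply le_epsilon. intros eps Heps.
  destruct (picard_limit_cv s eps Heps) as [N HN].
  specialize (HN (max N n) (Nat.le_max_l _ _)). unfold R_dist in HN.
  pose proof (picard_cauchy n (max N n) s a (Nat.le_max_r _ _) Ha).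
  replace (picard_limit s - picard n s) with
    ((picard (max N n) s - picard n s) - (picard (max N n) s - picard_limit s)) by ring.
  eapply Rle_trans; [apply Rabs_triang|]. rewrite Rabs_Ropp. lra.
Qed.

Lemma picard_limit_lipschitz (x z : R) :
  Rabs (picard_limit x - picard_limit z) <= K * Rabs (x - z).
Proof.
  apply le_epsilon. intros eps Heps.
  destruct (picard_tail_vanishes (Rabs (x - t0)) (eps / 2) ltac:(lra)) as [N1 H1].
  destruct (picard_tail_vanishes (Rabs (z - t0)) (eps / 2) ltac:(lra)) as [N2 H2].
  set (n := max N1 N2).
  pose proof (picard_limit_tail n x _ (Rle_refl _)).
  pose proof (picard_limit_tail n z _ (Rle_refl _)).
  specialize (H1 n (Nat.le_max_l _ _)). specialize (H2 n (Nat.le_max_r _ _)).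
  pose proof (picard_lipschitz n x z).
  replace (picard_limit x - picard_limit z) with
    ((picard_limit x - picard n x) + (picard n x - picard n z) - (picard_limit z - picard n z))
    by ring.
  eapply Rle_trans; [apply Rabs_triang|]. rewrite Rabs_Ropp.
  pose proof (Rabs_triang (picard_limit x - picard n x) (picard n x - picard n z)).
  lra.
Qed.

Lemma picard_limit_continuous (x : R) : continuous picard_limit x.
Proof. apply (lipschitz_continuous _ K). intros; apply picard_limit_lipschitz. Qed.

Lemma picard_limit_integral (t : R) :
  picard_limit t = y0 + RInt (fun s => G s (picard_limit s)) t0 t.
Proof.
  set (a := Rabs (t - t0)). assert (Ha : 0 <= a) by apply Rabs_pos.
  apply Rminus_diag_uniq, Rabs_eq_0, Rle_antisym; [|apply Rabs_pos].
  apply le_epsilon. intros eps Heps. rewrite Rplus_0_l.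
  set (e := eps / (1 + L * a)).
  assert (He : 0 < e) by (apply Rdiv_lt_0_compat; nra).
  destruct (picard_tail_vanishes a e He) as [N HN].
  pose proof (HN (S N) (Nat.le_succ_diag_r N)) as HtailS.
  pose proof (HN N (le_n N)) as Htail.
  pose proof (picard_limit_tail (S N) t a (Rle_refl _)) as HS.
  assert (Htail_nonneg : 0 <= picard_tail N a)
    by (eapply Rle_trans; [apply Rabs_pos|apply (picard_limit_tail N t a (Rle_refl _))]).
  assert (Hint : Rabs (RInt (fun s => G s (picard N s)) t0 t -
                       RInt (fun s => G s (picard_limit s)) t0 t) <= L * picard_tail N a * a).
  { rewrite <- (RInt_minus (V := R_CompleteNormedModule))
      by (apply ex_RInt_G; first [apply picard_continuous|apply picard_limit_continuous]).
    apply RInt_abs_le_const.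
    - apply (ex_RInt_minus (V := R_CompleteNormedModule)); apply ex_RInt_G;
        [apply picard_continuous|apply picard_limit_continuous].
    - intros s Hs. change (minus ?u ?v) with (u - v).
      eapply Rle_trans; [apply G_lip|]. apply Rmult_le_compat_l; [lra|].
      rewrite Rabs_minus_sym. apply picard_limit_tail.
      unfold a, Rmin, Rmax in *. destruct Rle_dec; unfold Rabs; repeat destruct Rcase_abs; lra. }
  change (picard (S N) t) with (y0 + RInt (fun s => G s (picard N s)) t0 t) in HS.
  replace (picard_limit t - (y0 + RInt (fun s => G s (picard_limit s)) t0 t)) with
    ((picard_limit t - (y0 + RInt (fun s => G s (picard N s)) t0 t)) +
     (RInt (fun s => G s (picard N s)) t0 t - RInt (fun s => G s (picard_limit s)) t0 t))
    by ring.
  eapply Rle_trans; [apply Rabs_triang|].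
  assert (L * picard_tail N a * a <= L * a * e)
    by (replace (L * picard_tail N a * a) with (L * a * picard_tail N a) by ring;
        apply Rmult_le_compat_l; nra).
  assert (e + L * a * e = eps) by (unfold e; field; nra).
  lra.
Qed.

Lemma picard_limit_derive (t : R) : is_derive picard_limit t (G t (picard_limit t)).
Proof.
  apply (is_derive_ext (fun t => y0 + RInt (fun s => G s (picard_limit s)) t0 t)).
  { intros s. symmetry. apply picard_limit_integral. }
  evar_last.
  - apply (is_derive_plus (fun _ => y0)); [apply is_derive_const|].
    apply (is_derive_RInt (V := R_CompleteNormedModule) (fun s => G s (picard_limit s)) _ t0).
    + apply filter_forall. intros b. apply (RInt_correct (V := R_CompleteNormedModule)).
      apply ex_RInt_G, picard_limit_continuous.
    + apply G_cont, picard_limit_continuous.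
  - change (0 + G t (picard_limit t) = G t (picard_limit t)). ring.
Qed.

End Picard.

Lemma ode_global_solution (G : R -> R -> R) (K L t0 y0 : R) : 0 < L ->
  (forall (h : R -> R) x, continuous h x -> continuous (fun s => G s (h s)) x) ->
  (forall s y, Rabs (G s y) <= K) ->
  (forall s y1 y2, Rabs (G s y1 - G s y2) <= L * Rabs (y1 - y2)) ->
  exists y : R -> R, y t0 = y0 /\ (forall t, is_derive y t (G t (y t))) /\
    (forall x z, Rabs (y x - y z) <= K * Rabs (x - z)).
Proof.
  intros HL Hcont Hbound Hlip. exists (picard_limit G t0 y0). split; [|split].
  - rewrite (picard_limit_integral G K L t0 y0 HL Hcont Hbound Hlip), RInt_point.
    change (@zero R_CompleteNormedModule) with 0. ring.
  - intros t. now apply (picard_limit_derive G K L).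
  - intros x z. now apply (picard_limit_lipschitz G K L).
Qed.

Inductive poly2 : Type :=
  | PConst (c : R) | PX | PY | PAdd (p q : poly2) | PMul (p q : poly2).

Fixpoint peval (p : poly2) (x y : R) : R :=
  match p with
  | PConst c => c
  | PX => x
  | PY => y
  | PAdd p q => peval p x y + peval q x y
  | PMul p q => peval p x y * peval q x y
  end.

Fixpoint pderiv (dx dy p : poly2) : poly2 :=
  match p with
  | PConst _ => PConst 0
  | PX => dx
  | PY => dy
  | PAdd p q => PAdd (pderiv dx dy p) (pderiv dx dy q)
  | PMul p q => PAdd (PMul (pderiv dx dy p) q) (PMul p (pderiv dx dy q))
  end.

Section PolynomialSystem.

Variables (u v : R -> R) (du dv : poly2) (U : R -> Prop).
Hypothesis U_open : open U.
Hypothesis u_derive : forall t, U t -> is_derive u t (peval du (u t) (v t)).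
Hypothesis v_derive : forall t, U t -> is_derive v t (peval dv (u t) (v t)).

Lemma is_derive_peval (p : poly2) (t : R) : U t ->
  is_derive (fun s => peval p (u s) (v s)) t (peval (pderiv du dv p) (u t) (v t)).
Proof.
  intros Ht. induction p as [c| | |p IHp q IHq|p IHp q IHq]; simpl.
  - apply (is_derive_const (K := R_AbsRing) (V := R_NormedModule)).
  - now apply u_derive.
  - now apply v_derive.
  - now apply (is_derive_plus (fun s => peval p (u s) (v s))).
  - evar_last.
    + apply (is_derive_mult (fun s => peval p (u s) (v s)) (fun s => peval q (u s) (v s)));
        [exact IHp|exact IHq|intros; apply Rmult_comm].
    + unfold plus, mult; simpl. ring.
Qed.

Lemma Derive_n_peval (n : nat) (p : poly2) (t : R) : U t ->
  Derive_n (fun s => peval p (u s) (v s)) n t =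
  peval (Nat.iter n (pderiv du dv) p) (u t) (v t).
Proof.
  revert t. induction n as [|n IH]; intros t Ht; [reflexivity|].
  simpl Derive_n.
  rewrite (Derive_ext_loc _ (fun s => peval (Nat.iter n (pderiv du dv) p) (u s) (v s))).
  - now apply is_derive_unique, is_derive_peval.
  - apply (filter_imp U); [intros; now apply IH|]. now apply U_open.
Qed.

Lemma ex_derive_n_peval (n : nat) (p : poly2) (t : R) : U t ->
  ex_derive_n (fun s => peval p (u s) (v s)) n t.
Proof.
  intros Ht. destruct n as [|n]; [exact I|]. simpl.
  apply (ex_derive_ext_loc (fun s => peval (Nat.iter n (pderiv du dv) p) (u s) (v s))).
  - apply (filter_imp U); [intros; symmetry; now apply Derive_n_peval|]. now apply U_open.
  - eexists. now apply is_derive_peval.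
Qed.

End PolynomialSystem.

Lemma coth_exp (x : R) : 0 < x -> coth x = 1 + 2 / (exp x * exp x - 1).
Proof.
  intros Hx. unfold coth, cosh, sinh. rewrite exp_Ropp.
  assert (1 < exp x) by (rewrite <- exp_0; apply exp_increasing; lra).
  field. split; nra.
Qed.

Lemma coth_gt_1 (x : R) : 0 < x -> 1 < coth x.
Proof.
  intros Hx. rewrite coth_exp by easy.
  assert (1 < exp x) by (rewrite <- exp_0; apply exp_increasing; lra).
  assert (0 < 2 / (exp x * exp x - 1)) by (apply Rdiv_lt_0_compat; nra). lra.
Qed.

Lemma coth_le (x y : R) : 0 < y -> y <= x -> coth x <= coth y.
Proof.
  intros Hy Hyx. rewrite !coth_exp by lra.
  assert (1 < exp y) by (rewrite <- exp_0; apply exp_increasing; lra).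
  assert (exp y <= exp x) by (destruct Hyx as [Hlt| ->]; [left; now apply exp_increasing|lra]).
  apply Rplus_le_compat_l, Rmult_le_compat_l; [lra|].
  apply Rinv_le_contravar; nra.
Qed.

Lemma coth_le_1_add (d x : R) : 0 < d -> 1 / d <= x -> coth x <= 1 + d.
Proof.
  intros Hd Hdx.
  assert (Hx : 0 < x) by (apply Rlt_le_trans with (1 / d); [apply Rdiv_lt_0_compat|]; lra).
  rewrite coth_exp by easy.
  assert (Hexp : 1 + 2 * x < exp (2 * x)) by (apply exp_ineq1; lra).
  replace (2 * x) with (x + x) in Hexp at 2 by ring. rewrite exp_plus in Hexp.
  assert (1 <= d * x)
    by (replace 1 with (d * (1 / d)) by (field; lra); apply Rmult_le_compat_l; lra).
  apply Rplus_le_compat_l, Rle_div_l; nra.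
Qed.

Lemma is_derive_coth (x : R) : 0 < x -> is_derive coth x (1 - coth x ^ 2).
Proof.
  intros Hx. unfold coth, cosh, sinh.
  assert (1 < exp x) by (rewrite <- exp_0; apply exp_increasing; lra).
  rewrite exp_Ropp.
  assert (0 < / exp x < 1)
    by (split; [apply Rinv_0_lt_compat; lra|rewrite <- Rinv_1; apply Rinv_lt_contravar; lra]).
  auto_derive; rewrite exp_Ropp; [lra|field; split; nra].
Qed.

Definition soliton_rhs (c y : R) : R := (1 + y ^ 2) * (2 - y * c).

Lemma soliton_rhs_lipschitz (c C B y1 y2 : R) : 0 <= c <= C -> Rabs y1 <= B -> Rabs y2 <= B ->
  Rabs (soliton_rhs c y1 - soliton_rhs c y2) <= (4 * B + C + 3 * C * B ^ 2) * Rabs (y1 - y2).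
Proof.
  intros Hc H1 H2. unfold soliton_rhs.
  replace ((1 + y1 ^ 2) * (2 - y1 * c) - (1 + y2 ^ 2) * (2 - y2 * c)) with
    ((2 * (y1 + y2) - c - c * (y1 ^ 2 + y1 * y2 + y2 ^ 2)) * (y1 - y2)) by ring.
  rewrite Rabs_mult. apply Rmult_le_compat_r; [apply Rabs_pos|].
  apply Rabs_le_between in H1. apply Rabs_le_between in H2.
  assert (Hq : 0 <= y1 ^ 2 + y1 * y2 + y2 ^ 2 <= 3 * B ^ 2) by (split; nra).
  assert (c * (y1 ^ 2 + y1 * y2 + y2 ^ 2) <= C * (3 * B ^ 2)) by (apply Rmult_le_compat; lra).
  assert (0 <= c * (y1 ^ 2 + y1 * y2 + y2 ^ 2)) by (apply Rmult_le_pos; lra).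
  apply Rabs_le. split; nra.
Qed.

Lemma soliton_rhs_bound (c C y B : R) : 0 <= c <= C -> 0 <= y <= B ->
  Rabs (soliton_rhs c y) <= (1 + B ^ 2) * (2 + B * C).
Proof.
  intros Hc Hy. unfold soliton_rhs. rewrite Rabs_mult.
  apply Rmult_le_compat; try apply Rabs_pos.
  - rewrite Rabs_pos_eq; nra.
  - apply Rabs_le. split; nra.
Qed.

Lemma soliton_rhs_le_neg (c y e : R) : 1 <= c -> 0 < e -> 2 + e < y -> soliton_rhs c y <= - e.
Proof.
  intros Hc He Hy. unfold soliton_rhs.
  assert (2 - y * c < - e) by nra. assert (0 <= y ^ 2) by nra. nra.
Qed.

Lemma soliton_rhs_ge (c y e : R) : 0 < e <= 1 -> 1 <= c <= 1 + e / 4 -> y < 2 - e ->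
  e / 2 <= soliton_rhs c y.
Proof.
  intros He Hc Hy. unfold soliton_rhs.
  assert (y * c <= (2 - e) * (1 + e / 4)) by nra.
  nra.
Qed.

Lemma continuous_soliton_rhs (c y : R -> R) (x : R) : continuous c x -> continuous y x ->
  continuous (fun s => soliton_rhs (c s) (y s)) x.
Proof.
  intros Hc Hy. unfold soliton_rhs.
  apply (continuous_mult (fun s => 1 + y s ^ 2) (fun s => 2 - y s * c s)).
  - apply (continuous_plus (fun _ => 1) (fun s => y s ^ 2)); [apply continuous_const|].
    apply (continuous_mult y (fun s => y s * 1)); [easy|].
    apply (continuous_mult y (fun _ => 1)); [easy|apply continuous_const].
  - apply (continuous_minus (fun _ => 2) (fun s => y s * c s)); [apply continuous_const|].
    now apply (continuous_mult y c).
Qed.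

Lemma soliton_limit (phi : R -> R) (R0 : R) : 0 < R0 ->
  (forall r, R0 <= r -> is_derive phi r (soliton_rhs (coth r) (phi r))) ->
  is_lim phi p_infty 2.
Proof.
  intros HR Hd. apply is_lim_spec. intros [eps Heps]. simpl.
  set (e := Rmin (eps / 2) 1).
  assert (He : 0 < e <= 1) by (split; [apply Rmin_glb_lt; lra|apply Rmin_r]).
  assert (He2 : e < eps) by (pose proof (Rmin_l (eps / 2) 1); unfold e in *; lra).
  assert (Hcoth : forall r, R0 <= r -> 1 <= coth r) by (intros; left; apply coth_gt_1; lra).
  destruct (eventually_le_of_derive phi (fun r => soliton_rhs (coth r) (phi r)) R0 (2 + e) e)
    as [X1 H1]; [lra|easy| |].
  { intros r Hr Hphi. apply soliton_rhs_le_neg; auto; lra. }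
  set (a := Rmax R0 (1 / (e / 4))).
  assert (Ha : R0 <= a /\ 1 / (e / 4) <= a) by (split; [apply Rmax_l|apply Rmax_r]).
  destruct (eventually_le_of_derive (fun r => - phi r) (fun r => - soliton_rhs (coth r) (phi r))
              a (- (2 - e)) (e / 2)) as [X2 H2]; [lra| | |].
  { intros r Hr. apply (is_derive_opp phi). apply Hd. lra. }
  { intros r Hr Hphi. assert (e / 2 <= soliton_rhs (coth r) (phi r)); [|lra].
    apply soliton_rhs_ge; [easy| |lra].
    split; [apply Hcoth; lra|apply coth_le_1_add; lra]. }
  exists (Rmax X1 X2). intros r Hr.
  pose proof (H1 r ltac:(pose proof (Rmax_l X1 X2); lra)).
  pose proof (H2 r ltac:(pose proof (Rmax_r X1 X2); lra)).
  apply Rabs_lt_between'. lra.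
Qed.

Lemma solves_ivp_unique (R0 phi0 : R) (psi1 psi2 : R -> R) : 0 < R0 ->
  solves_ivp R0 phi0 psi1 -> solves_ivp R0 phi0 psi2 ->
  forall r, R0 <= r -> psi1 r = psi2 r.
Proof.
  intros HR [Hinit1 Hd1] [Hinit2 Hd2] r Hr.
  assert (Hbounded : forall psi : R -> R,
            (forall x, R0 <= x -> is_derive psi x (soliton_rhs (coth x) (psi x))) ->
            exists B, forall x, R0 <= x <= r -> Rabs (psi x) <= B).
  { intros psi Hd. apply continuous_bounded; [easy|]. intros x Hx.
    apply (ex_derive_continuous psi). eexists. apply Hd. lra. }
  destruct (Hbounded psi1 Hd1) as [B1 Hpsi1].
  destruct (Hbounded psi2 Hd2) as [B2 Hpsi2].
  set (B := Rmax B1 B2).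
  apply (ode_unique_lipschitz (fun x y => soliton_rhs (coth x) y) psi1 psi2 R0 r
           (4 * B + coth R0 + 3 * coth R0 * B ^ 2)); [easy|intros; apply Hd1; lra
           |intros; apply Hd2; lra| |congruence].
  intros x Hx. apply soliton_rhs_lipschitz.
  - pose proof (coth_gt_1 x ltac:(lra)). pose proof (coth_le x R0 HR (proj1 Hx)). lra.
  - eapply Rle_trans; [now apply Hpsi1|apply Rmax_l].
  - eapply Rle_trans; [now apply Hpsi2|apply Rmax_r].
Qed.

Definition clamp (m y : R) : R := Rmax 0 (Rmin m y).

Lemma clamp_range (m y : R) : 0 <= m -> 0 <= clamp m y <= m.
Proof. intros. unfold clamp, Rmax, Rmin. repeat destruct Rle_dec; lra. Qed.

Lemma clamp_id (m y : R) : 0 <= y <= m -> clamp m y = y.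
Proof. intros. unfold clamp, Rmax, Rmin. repeat destruct Rle_dec; lra. Qed.

Lemma clamp_ge (m y : R) : 0 <= m -> m <= y -> clamp m y = m.
Proof. intros. unfold clamp, Rmax, Rmin. repeat destruct Rle_dec; lra. Qed.

Lemma clamp_le0 (m y : R) : y <= 0 -> clamp m y = 0.
Proof. intros. unfold clamp, Rmax, Rmin. repeat destruct Rle_dec; lra. Qed.

Lemma clamp_lipschitz (m y1 y2 : R) : Rabs (clamp m y1 - clamp m y2) <= Rabs (y1 - y2).
Proof.
  unfold clamp, Rmax, Rmin. apply Rabs_le.
  repeat destruct Rle_dec; unfold Rabs; destruct Rcase_abs; lra.
Qed.

Section Existence.

Variables R0 phi0 : R.
Hypothesis R0_pos : 0 < R0.
Hypothesis phi0_pos : 0 < phi0.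

(* [M >= 2] makes [phi <= M] a barrier for r >= R0; [M >= 2 phi0] leaves room left of R0. *)
Let M : R := Rmax (2 * phi0) 2.
Let C : R := coth (R0 / 2).
Let K : R := (1 + M ^ 2) * (2 + M * C).
Let L : R := 4 * M + C + 3 * C * M ^ 2.

Let truncated_rhs (s y : R) : R := soliton_rhs (coth (Rmax (R0 / 2) s)) (clamp M y).

Let M_ge_2 : 2 <= M.
Proof. apply Rmax_r. Qed.

Let coth_truncated_range (s : R) : 0 <= coth (Rmax (R0 / 2) s) <= C.
Proof.
  pose proof (Rmax_l (R0 / 2) s). split.
  - left. apply Rlt_trans with 1; [lra|apply coth_gt_1; lra].
  - apply coth_le; lra.
Qed.

Let truncated_rhs_bound (s y : R) : Rabs (truncated_rhs s y) <= K.
Proof. apply soliton_rhs_bound; [apply coth_truncated_range|apply clamp_range; lra]. Qed.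

Let truncated_rhs_lipschitz (s y1 y2 : R) :
  Rabs (truncated_rhs s y1 - truncated_rhs s y2) <= L * Rabs (y1 - y2).
Proof.
  assert (HC : 1 < C) by (apply coth_gt_1; lra).
  eapply Rle_trans; [apply soliton_rhs_lipschitz with (B := M)|].
  - apply coth_truncated_range.
  - pose proof (clamp_range M y1 ltac:(lra)). rewrite Rabs_pos_eq; lra.
  - pose proof (clamp_range M y2 ltac:(lra)). rewrite Rabs_pos_eq; lra.
  - apply Rmult_le_compat_l; [unfold L; nra|apply clamp_lipschitz].
Qed.

Let truncated_rhs_continuous (h : R -> R) (x : R) : continuous h x ->
  continuous (fun s => truncated_rhs s (h s)) x.
Proof.
  intros Hh. apply continuous_soliton_rhs.
  - apply (continuous_comp (fun s => Rmax (R0 / 2) s) coth).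
    + apply (lipschitz_continuous _ 1). intros y. rewrite Rmult_1_l.
      unfold Rmax. repeat destruct Rle_dec; unfold Rabs; repeat destruct Rcase_abs; lra.
    + apply (ex_derive_continuous coth). eexists. apply is_derive_coth.
      pose proof (Rmax_l (R0 / 2) x). lra.
  - apply (continuous_comp h (clamp M)); [easy|].
    apply (lipschitz_continuous _ 1). intros y. rewrite Rmult_1_l. apply clamp_lipschitz.
Qed.

Section TruncatedSolution.

Variable phi : R -> R.
Hypothesis phi_init : phi R0 = phi0.
Hypothesis phi_derive : forall t, is_derive phi t (truncated_rhs t (phi t)).
Hypothesis phi_lipschitz : forall x z, Rabs (phi x - phi z) <= K * Rabs (x - z).

Let eps : R := Rmin (R0 / 2) (phi0 / (2 * K)).

Let K_pos : 0 < K.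
Proof.
  assert (1 < C) by (apply coth_gt_1; lra).
  unfold K. apply Rmult_lt_0_compat; nra.
Qed.

Let eps_pos : 0 < eps.
Proof. apply Rmin_glb_lt; [lra|]. apply Rdiv_lt_0_compat; lra. Qed.

Let phi_le_M (x : R) : R0 <= x -> phi x <= M.
Proof.
  intros Hx.
  apply (barrier_le phi (fun t => truncated_rhs t (phi t)) R0 x);
    [easy|intros; apply phi_derive| |].
  - rewrite phi_init. assert (2 * phi0 <= M) by apply Rmax_l. lra.
  - intros t Ht Hphi. unfold truncated_rhs, soliton_rhs. rewrite clamp_ge by lra.
    assert (1 < coth (Rmax (R0 / 2) t)) by (apply coth_gt_1; pose proof (Rmax_l (R0 / 2) t); lra).
    assert (0 < 1 + M ^ 2) by nra. assert (2 - M * coth (Rmax (R0 / 2) t) < 0) by nra. nra.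
Qed.

Let phi_nonneg (x : R) : R0 <= x -> 0 <= phi x.
Proof.
  intros Hx. cut (- phi x <= 0); [lra|].
  apply (barrier_le (fun t => - phi t) (fun t => - truncated_rhs t (phi t)) R0 x);
    [easy|intros; now apply (is_derive_opp phi)|rewrite phi_init; lra|].
  intros t Ht Hphi. unfold truncated_rhs, soliton_rhs. rewrite clamp_le0 by lra. lra.
Qed.

Let phi_range (x : R) : R0 - eps < x -> 0 <= phi x <= M.
Proof.
  intros Hx. destruct (Rle_dec R0 x) as [HR0x|HxR0]; [split; auto|].
  assert (Hdist : K * Rabs (x - R0) <= phi0 / 2).
  { rewrite Rabs_left by lra.
    apply Rle_trans with (K * (phi0 / (2 * K))); [|right; field; lra].
    apply Rmult_le_compat_l; [lra|]. assert (eps <= phi0 / (2 * K)) by apply Rmin_r. lra. }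
  pose proof (phi_lipschitz x R0) as Hlip. rewrite phi_init in Hlip.
  apply Rabs_le_between in Hlip. assert (2 * phi0 <= M) by apply Rmax_l. lra.
Qed.

Let phi_solves (x : R) : R0 - eps < x -> is_derive phi x (soliton_rhs (coth x) (phi x)).
Proof.
  intros Hx. assert (eps <= R0 / 2) by apply Rmin_l.
  specialize (phi_derive x). unfold truncated_rhs in phi_derive.
  now rewrite Rmax_right, clamp_id in phi_derive by (try apply phi_range; lra).
Qed.

Lemma truncated_solution_smooth : smooth_on_half_line R0 phi.
Proof.
  exists eps. split; [easy|]. intros n x Hx.
  (* with X = coth r and Y = phi r: X' = 1 - X^2 and Y' = (1 + Y^2)(2 - Y X) *)
  apply (ex_derive_n_peval coth phi
           (PAdd (PConst 1) (PMul (PConst (-1)) (PMul PX PX)))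
           (PMul (PAdd (PConst 1) (PMul PY PY)) (PAdd (PConst 2) (PMul (PConst (-1)) (PMul PY PX))))
           (fun t => R0 - eps < t) (open_gt _)) with (p := PY); [| |easy].
  - intros t Ht. assert (eps <= R0 / 2) by apply Rmin_l.
    evar_last; [apply is_derive_coth; lra|simpl; ring].
  - intros t Ht. evar_last; [now apply phi_solves|unfold soliton_rhs; simpl; ring].
Qed.

Lemma truncated_solution_solves : solves_ivp R0 phi0 phi.
Proof. split; [easy|]. intros r Hr. apply phi_solves. lra. Qed.

End TruncatedSolution.

Lemma soliton_solution_exists : exists phi, smooth_on_half_line R0 phi /\ solves_ivp R0 phi0 phi.
Proof.
  destruct (ode_global_solution truncated_rhs K L R0 phi0) as [phi [Hinit [Hd Hlip]]].
  - assert (1 < C) by (apply coth_gt_1; lra). unfold L. nra.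
  - apply truncated_rhs_continuous.
  - apply truncated_rhs_bound.
  - apply truncated_rhs_lipschitz.
  - exists phi. split; [now apply truncated_solution_smooth|now apply truncated_solution_solves].
Qed.

End Existence.

Theorem lemma4p1 (R0 phi0 : R) (hR : 0 < R0) (hphi0 : 0 < phi0) :
  exists phi : R -> R,
    smooth_on_half_line R0 phi /\ solves_ivp R0 phi0 phi /\
    (forall psi : R -> R,
       smooth_on_half_line R0 psi -> solves_ivp R0 phi0 psi ->
       forall r : R, R0 <= r -> psi r = phi r) /\
    is_lim phi p_infty 2.
Proof.
  destruct (soliton_solution_exists R0 phi0 hR hphi0) as [phi [Hsmooth Hsolves]].
  exists phi. split; [|split; [|split]].
  - exact Hsmooth.
  - exact Hsolves.
  - intros psi _ Hpsi. now apply (solves_ivp_unique R0 phi0).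
  - apply (soliton_limit phi R0 hR), Hsolves.
Qed.
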